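(* Let $\Omega_\star$ be a discrete filtered set centred at $\omega\in\mathbb{C}$. Then the direct limit $\Omega^\infty_\star=\varinjlim_n \sum_{n\ast}\Omega_\star$ of its iterated fine sums is a discrete filtered set centred at $\omega$.
   Context: A discrete filtered set centred at $\omega$ is a family $\Omega_\star=(\Omega_L)_{L>0}$ of finite subsets of $\mathbb{C}$ with $\Omega_L\subset D(\omega,L)$ (open disc) for every $L>0$, $\Omega_{L_1}\subseteq\Omega_{L_2}$ whenever $L_1\le L_2$, and $\Omega_L=\{\omega\}$ for all sufficiently small $L>0$. The fine sum of two discrete filtered sets centred at $\omega$ is given by $(\Omega_\star\ast\Omega'_\star)_L=\{-\omega+\omega_1+\omega_2:\omega_1\in\Omega_{L_1},\omega_2\in\Omega'_{L_2},L_1+L_2=L\}$. $\sum_{n\ast}\Omega_\star$ denotes the $n$-fold fine sum $\Omega_\star\ast\cdots\ast\Omega_\star$; for each $L$ these form a direct system via the inclusions $(\sum_{n\ast}\Omega_\star)_L\hookrightarrow(\sum_{(n+1)\ast}\Omega_\star)_L$, and the direct limit is $L\mapsto\bigcup_n(\sum_{n\ast}\Omega_\star)_L$. *)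

From Stdlib Require Import Reals List.
From Coquelicot Require Import Coquelicot.
Open Scope R_scope.

Definition finite_set (S : C -> Prop) : Prop :=
  exists l : list C, forall z, S z <-> In z l.

Definition open_disc (w : C) (L : R) (z : C) : Prop := Cmod (Cminus z w) < L.

(* A family L |-> Om L of subsets of C, indexed by L > 0 (values at L <= 0
   are irrelevant). *)
Definition discrete_filtered_set (w : C) (Om : R -> C -> Prop) : Prop :=
  (forall L, 0 < L -> finite_set (Om L)) /\
  (forall L, 0 < L -> forall z, Om L z -> open_disc w L z) /\
  (forall L1 L2, 0 < L1 -> L1 <= L2 -> forall z, Om L1 z -> Om L2 z) /\
  (exists eps, 0 < eps /\ forall L, 0 < L -> L < eps -> forall z, Om L z <-> z = w).

Definition fine_sum (w : C) (Om Om' : R -> C -> Prop) (L : R) (z : C) : Prop :=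
  exists L1 L2 z1 z2, 0 < L1 /\ 0 < L2 /\ L1 + L2 = L /\
    Om L1 z1 /\ Om' L2 z2 /\ z = Cplus (Cplus (Copp w) z1) z2.

(* iter_fine_sum w Om n = the (n+1)-fold fine sum  Om * ... * Om. *)
Fixpoint iter_fine_sum (w : C) (Om : R -> C -> Prop) (n : nat) : R -> C -> Prop :=
  match n with
  | O => Om
  | S k => fine_sum w (iter_fine_sum w Om k) Om
  end.

(* Direct limit: L |-> union over n >= 1 of the n-fold fine sums at level L. *)
Definition fine_sum_limit (w : C) (Om : R -> C -> Prop) (L : R) (z : C) : Prop :=
  exists n : nat, iter_fine_sum w Om n L z.

(* Let [Om L = {w}] for [L < eps]. A summand [z_i <> w] of an iterated fine sum
   at level [L] lives at a level [L_i >= eps]; so a sum contains at most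
   [L / eps] nontrivial elements, each taken from the finite set [Om L], and the
   union over all [n] is finite. The other axioms pass through the fine sum
   levelwise: the triangle inequality for the disc, and enlarging the last level
   for monotonicity. *)

From Stdlib Require Import Reals List Lra Classical ClassicalEpsilon.
From Coquelicot Require Import Coquelicot.

Lemma finite_set_incl (S : C -> Prop) (l : list C) :
  (forall z, S z -> In z l) -> finite_set S.
Proof.
  intros HS.
  exists (filter (fun z => if excluded_middle_informative (S z) then true else false) l).
  intros z; rewrite filter_In.
  destruct (excluded_middle_informative (S z)) as [Hz | Hz]; split.
  - auto.
  - tauto.
  - contradiction.
  - intros [_ Hfalse]; discriminate.
Qed.

Lemma centred_sum_l (w z : C) : Cplus (Cplus (Copp w) w) z = z.
Proof. destruct w, z; unfold Cplus, Copp; simpl; f_equal; ring. Qed.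

Lemma centred_sum_r (w z : C) : Cplus (Cplus (Copp w) z) w = z.
Proof. destruct w, z; unfold Cplus, Copp; simpl; f_equal; ring. Qed.

Lemma centred_sum_sub (w z1 z2 : C) :
  Cminus (Cplus (Cplus (Copp w) z1) z2) w = Cplus (Cminus z1 w) (Cminus z2 w).
Proof. destruct w, z1, z2; unfold Cminus, Cplus, Copp; simpl; f_equal; ring. Qed.

Section IteratedFineSum.

Variable w : C.
Variable Om : R -> C -> Prop.

Notation iter := (iter_fine_sum w Om).

Hypothesis Om_in_disc : forall L, 0 < L -> forall z, Om L z -> open_disc w L z.

Lemma iter_fine_sum_in_disc n L z : 0 < L -> iter n L z -> open_disc w L z.
Proof.
  revert L z; induction n as [|n IH]; intros L z HL Hz; simpl in Hz.
  - exact (Om_in_disc L HL z Hz).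
  - destruct Hz as (L1 & L2 & z1 & z2 & HL1 & HL2 & HL12 & Hz1 & Hz2 & ->).
    unfold open_disc in *; rewrite centred_sum_sub.
    eapply Rle_lt_trans; [apply Cmod_triangle |].
    specialize (IH L1 z1 HL1 Hz1); specialize (Om_in_disc L2 HL2 z2 Hz2); lra.
Qed.

Hypothesis Om_mono : forall L1 L2, 0 < L1 -> L1 <= L2 -> forall z, Om L1 z -> Om L2 z.

Lemma iter_fine_sum_mono n L1 L2 z :
  0 < L1 -> L1 <= L2 -> iter n L1 z -> iter n L2 z.
Proof.
  intros HL1 HL12 Hz; destruct n as [|n]; simpl in *.
  - exact (Om_mono L1 L2 HL1 HL12 z Hz).
  - destruct Hz as (A & B & z1 & z2 & HA & HB & HAB & Hz1 & Hz2 & ->).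
    exists A, (B + (L2 - L1)), z1, z2; repeat split; try lra; auto.
    apply (Om_mono B); auto; lra.
Qed.

Variable eps : R.
Hypothesis Om_small : forall L, 0 < L -> L < eps -> forall z, Om L z -> z = w.

Lemma iter_fine_sum_small n L z : 0 < L -> L < eps -> iter n L z -> z = w.
Proof.
  revert L z; induction n as [|n IH]; intros L z HL HLe Hz; simpl in Hz.
  - exact (Om_small L HL HLe z Hz).
  - destruct Hz as (A & B & z1 & z2 & HA & HB & HAB & Hz1 & Hz2 & ->).
    rewrite (IH A z1 HA ltac:(lra) Hz1), (Om_small B HB ltac:(lra) z2 Hz2).
    apply centred_sum_l.
Qed.

(* [bounded_sums l m] lists every centred sum of at most [m] elements of [l]. *)
Fixpoint bounded_sums (l : list C) (m : nat) : list C :=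
  match m with
  | O => w :: nil
  | S k => bounded_sums l k ++
           flat_map (fun a => map (fun b => Cplus (Cplus (Copp w) a) b) l)
                    (bounded_sums l k)
  end.

Lemma bounded_sums_centre l m : In w (bounded_sums l m).
Proof. induction m; simpl; [left | apply in_or_app; left]; auto. Qed.

Lemma bounded_sums_S l m a b :
  In a (bounded_sums l m) -> In b l ->
  In (Cplus (Cplus (Copp w) a) b) (bounded_sums l (S m)).
Proof.
  intros Ha Hb; simpl; apply in_or_app; right; apply in_flat_map.
  exists a; split; [| apply in_map]; auto.
Qed.

(* Induction on [n]: a summand other than [w] uses up at least [eps] of the level. *)
Lemma iter_fine_sum_bounded_sums (L : R) (l : list C) :
  (forall L', 0 < L' -> L' <= L -> forall z, Om L' z -> In z l) ->
  forall n m L' z, 0 < L' -> L' <= L -> L' < INR (S m) * eps ->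
  iter n L' z -> In z (bounded_sums l m).
Proof.
  intros Hl n; induction n as [|n IH]; intros m L' z HL' HL'L Hm Hz; simpl in Hz.
  - destruct (classic (z = w)) as [-> | Hne]; [apply bounded_sums_centre |].
    destruct m as [|m].
    + simpl in Hm; elim Hne; apply (Om_small L'); auto; lra.
    + rewrite <- (centred_sum_l w z); apply bounded_sums_S;
        [apply bounded_sums_centre | exact (Hl L' HL' HL'L z Hz)].
  - destruct Hz as (A & B & z1 & z2 & HA & HB & HAB & Hz1 & Hz2 & ->).
    destruct (classic (z2 = w)) as [-> | Hne].
    + rewrite centred_sum_r; apply (IH m A); auto; lra.
    + assert (Heps_B : eps <= B).
      { destruct (Rlt_le_dec B eps) as [HBe | HBe]; auto.
        elim Hne; exact (Om_small B HB HBe z2 Hz2). }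
      destruct m as [|m]; [simpl in Hm; lra |].
      rewrite S_INR in Hm; apply bounded_sums_S.
      * apply (IH m A); auto; lra.
      * apply (Hl B); auto; lra.
Qed.

Hypothesis eps_pos : 0 < eps.
Hypothesis Om_finite : forall L, 0 < L -> finite_set (Om L).

Lemma fine_sum_limit_finite L : 0 < L -> finite_set (fine_sum_limit w Om L).
Proof.
  intros HL; destruct (Om_finite L HL) as [l Hl].
  destruct (INR_archimed eps L (Rlt_gt _ _ eps_pos)) as [m Hm].
  apply (finite_set_incl _ (bounded_sums l m)); intros z [n Hz].
  apply (iter_fine_sum_bounded_sums L l) with (n := n) (L' := L); auto; try lra.
  - intros L' HL' HL'L z' Hz'; apply Hl, (Om_mono L'); auto.
  - rewrite S_INR; lra.
Qed.

End IteratedFineSum.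

Theorem proposition2p4 (w : C) (Om : R -> C -> Prop) :
  discrete_filtered_set w Om ->
  discrete_filtered_set w (fine_sum_limit w Om).
Proof.
  intros (Hfin & Hdisc & Hmono & eps & Heps & Hsmall).
  assert (Hsmall_w : forall L, 0 < L -> L < eps -> forall z, Om L z -> z = w)
    by (intros L HL HLe z; apply (Hsmall L HL HLe z)).
  split; [| split; [| split]].
  - exact (fine_sum_limit_finite w Om Hmono eps Hsmall_w Heps Hfin).
  - intros L HL z [n Hz]; exact (iter_fine_sum_in_disc w Om Hdisc n L z HL Hz).
  - intros L1 L2 HL1 HL12 z [n Hz]; exists n.
    exact (iter_fine_sum_mono w Om Hmono n L1 L2 z HL1 HL12 Hz).
  - exists eps; split; auto; intros L HL HLe z; split.
    + intros [n Hz]; exact (iter_fine_sum_small w Om eps Hsmall_w n L z HL HLe Hz).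
    + intros ->; exists O; apply (Hsmall L HL HLe); reflexivity.
Qed.
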